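(* Every finitely generated non-abelian free group is Hucha with respect to the family of its finitely generated infinite-index subgroups.
   Context: A positive cone of a group $G$ is a subsemigroup $P$ with $G=P\sqcup P^{-1}\sqcup\{1\}$. With a finite symmetric generating set $X$ and word metric $d_X$, an $r$-path is a sequence $g_0,\dots,g_n$ with $d_X(g_i,g_{i+1})\le r$. A set $S$ $r$-disconnects subsets $H_1,H_2$ if every $r$-path from $H_1$ to $H_2$ meets $S$; $S$ $r$-disconnects $P$ if there are $u,v\in P$ with $S$ $r$-disconnecting $\{u\},\{v\}$. A negative swamp of width $r$ for a subgroup $H$ (with respect to $P$) is $S\subseteq P^{-1}$ that $r$-disconnects $P$ and $r$-disconnects $g_1H,g_2H$ for some $g_1,g_2\in G$. A finitely generated left-orderable group $G$ is Hucha with respect to a family $\mathcal{H}$ of subgroups if for some (equivalently any) finite generating set, for every positive cone $P$, every $H\in\mathcal{H}$ and every $r>0$ there is a negative swamp of width $r$ for $H$. *)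

From Stdlib Require Import List Arith.
Import ListNotations.
Set Implicit Arguments.

Record grp := Grp {
  carrier :> Type;
  gmul : carrier -> carrier -> carrier;
  ginv : carrier -> carrier;
  gone : carrier;
  gmulA : forall x y z, gmul x (gmul y z) = gmul (gmul x y) z;
  gmul1l : forall x, gmul gone x = x;
  gmul1r : forall x, gmul x gone = x;
  gmulVl : forall x, gmul (ginv x) x = gone;
  gmulVr : forall x, gmul x (ginv x) = gone
}.

Section GroupDefs.
Variable G : grp.

Fixpoint gprod (w : list G) : G :=
  match w with [] => gone G | x :: t => gmul G x (gprod t) end.

Definition subset_of := G -> Prop.

Definition positive_cone (P : subset_of) : Prop :=
  (forall x y, P x -> P y -> P (gmul G x y)) /\
  (forall g, P g \/ P (ginv G g) \/ g = gone G) /\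
  (forall g, ~ (P g /\ P (ginv G g))) /\
  (forall g, ~ (P g /\ g = gone G)) /\
  (forall g, ~ (P (ginv G g) /\ g = gone G)).

Definition left_orderable : Prop := exists P, positive_cone P.

Definition generates (X : list G) : Prop :=
  forall g, exists w : list G, (forall x, In x w -> In x X) /\ gprod w = g.

Definition symmetric_set (X : list G) : Prop :=
  forall x, In x X -> In (ginv G x) X.

Definition finitely_generated_group : Prop :=
  exists X : list G, generates X.

(** word metric: d_X(g,h) <= r  iff  g^{-1} h is a product of at most r
    elements of X *)
Definition dist_le (X : list G) (g h : G) (r : nat) : Prop :=
  exists w : list G, (forall x, In x w -> In x X) /\ length w <= r /\
    gprod w = gmul G (ginv G g) h.

(** r-path g0, g1, ..., gn represented as g0 together with [g1; ...; gn] *)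
Fixpoint rpath (X : list G) (r : nat) (g0 : G) (l : list G) : Prop :=
  match l with
  | [] => True
  | h :: t => dist_le X g0 h r /\ rpath X r h t
  end.

Definition r_disconnects (X : list G) (r : nat) (S H1 H2 : subset_of) : Prop :=
  forall g0 l, rpath X r g0 l -> H1 g0 -> H2 (last l g0) ->
    exists x, In x (g0 :: l) /\ S x.

Definition r_disconnects_cone (X : list G) (r : nat) (S P : subset_of) : Prop :=
  exists u v, P u /\ P v /\
    r_disconnects X r S (fun x => x = u) (fun x => x = v).

Definition lcoset (g : G) (H : subset_of) : subset_of :=
  fun x => exists h, H h /\ x = gmul G g h.

Definition negative_swamp (X : list G) (P H : subset_of) (r : nat)
    (S : subset_of) : Prop :=
  (forall g, S g -> P (ginv G g)) /\
  r_disconnects_cone X r S P /\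
  exists g1 g2, r_disconnects X r S (lcoset g1 H) (lcoset g2 H).

Definition Hucha (Fam : subset_of -> Prop) : Prop :=
  finitely_generated_group /\ left_orderable /\
  forall X : list G, generates X -> symmetric_set X ->
  forall P, positive_cone P ->
  forall H, Fam H ->
  forall r : nat, 0 < r ->
  exists S, negative_swamp X P H r S.

Definition subgroup (H : subset_of) : Prop :=
  H (gone G) /\ (forall x y, H x -> H y -> H (gmul G x y)) /\
  (forall x, H x -> H (ginv G x)).

Definition finitely_generated_subgroup (H : subset_of) : Prop :=
  subgroup H /\
  exists L : list G, (forall x, In x L -> H x) /\
    forall g, H g -> exists w : list G,
      (forall x, In x w -> In x L \/ In (ginv G x) L) /\ gprod w = g.

(** infinite index: no finitely many left cosets cover G *)
Definition infinite_index (H : subset_of) : Prop :=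
  forall L : list G, exists g, forall x, In x L -> ~ H (gmul G (ginv G x) g).

(** * Free groups: a basis b_0,...,b_{n-1}; every element is uniquely
    represented by a reduced word. Letter (i,true) is b_i, (i,false) is b_i^{-1}. *)
Definition letter_val (b : nat -> G) (a : nat * bool) : G :=
  if snd a then b (fst a) else ginv G (b (fst a)).

Definition word_eval (b : nat -> G) (w : list (nat * bool)) : G :=
  gprod (map (letter_val b) w).

Fixpoint reduced_word (w : list (nat * bool)) : Prop :=
  match w with
  | [] => True
  | a :: t =>
      match t with
      | [] => True
      | c :: _ => ~ (fst a = fst c /\ snd a <> snd c)
      end /\ reduced_word t
  end.

Definition free_basis (n : nat) (b : nat -> G) : Prop :=
  forall g, exists! w : list (nat * bool),
    (forall a, In a w -> fst a < n) /\ reduced_word w /\ word_eval b w = g.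

End GroupDefs.

From Stdlib Require Import List Arith ZArith Lia.
From Stdlib Require Import Classical ClassicalEpsilon FunctionalExtensionality.
Import ListNotations.

(** The Magnus map [b_i |-> 1 + X_i] embeds the free group into the units of
    [Z<<X_0, ..., X_(n-1)>>]; declaring [g] positive when the shortlex-first nonconstant
    coefficient of its image is positive gives a positive cone, so the group is
    left-orderable.

    Given any positive cone [P], a finite [X] and a width [r], let [R] bound the word
    length of an [r]-step and pick [c] with [g^-1 c] in [P] for every [g] of length at
    most [R]. Then [c x] has length greater than [R] for every [x] outside
    [S = P^-1], and since normal forms starting with different letters multiply without
    cancellation, the first letter of the normal form of [c x] is constant along every
    [r]-path avoiding [S]. Hence [S] separates any two sets whose translates by [c] start
    with different letters: the positive elements [c^-1 b_0^(+-N) c] and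
    [c^-1 b_1^(+-N) c] for [N] larger than the length of [c], and the cosets
    [c^-1 b_j^(+-1) g0^-1 H], where [g0] is a reduced word that is a prefix of no element
    of [H]; such a word exists because [H] is finitely generated of infinite index. *)

Section GroupFacts.
Variable G : grp.
Local Notation "x * y" := (gmul G x y).
Local Notation inv := (ginv G).
Local Notation e := (gone G).

Lemma gmul_cancel_l (x y z : G) : x * y = x * z -> y = z.
Proof.
  intro H. rewrite <- (gmul1l G y), <- (gmul1l G z), <- (gmulVl G x), <- !gmulA, H.
  reflexivity.
Qed.

Lemma ginv_unique (x y : G) : x * y = e -> y = inv x.
Proof. intro H. apply (gmul_cancel_l x). rewrite H, gmulVr. reflexivity. Qed.

Lemma ginvK (x : G) : inv (inv x) = x.
Proof. symmetry. apply ginv_unique, gmulVl. Qed.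

Lemma ginvM (x y : G) : inv (x * y) = inv y * inv x.
Proof.
  symmetry. apply ginv_unique.
  rewrite gmulA, <- (gmulA G x y), gmulVr, gmul1r, gmulVr. reflexivity.
Qed.

Lemma ginv1 : inv e = e.
Proof. symmetry. apply ginv_unique, gmul1l. Qed.

Lemma gmulKl (x y : G) : inv x * (x * y) = y.
Proof. rewrite gmulA, gmulVl, gmul1l. reflexivity. Qed.

Lemma gmulKVl (x y : G) : x * (inv x * y) = y.
Proof. rewrite gmulA, gmulVr, gmul1l. reflexivity. Qed.

Lemma gprod_app (u v : list G) : gprod G (u ++ v) = gprod G u * gprod G v.
Proof.
  induction u as [|x u IH]; simpl.
  - rewrite gmul1l. reflexivity.
  - rewrite IH, gmulA. reflexivity.
Qed.

End GroupFacts.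

Notation letter := (nat * bool)%type.
Definition letter_inv (a : letter) : letter := (fst a, negb (snd a)).
Definition word_inv (w : list letter) : list letter := rev (map letter_inv w).
Definition cancels (x y : letter) : Prop := fst x = fst y /\ snd x <> snd y.

Definition reduced_junction (u v : list letter) : Prop :=
  match rev u, v with
  | x :: _, y :: _ => ~ cancels x y
  | _, _ => True
  end.

Lemma letter_invK a : letter_inv (letter_inv a) = a.
Proof. destruct a as [i s]. unfold letter_inv. simpl. rewrite Bool.negb_involutive. reflexivity.
Qed.

Lemma word_inv_cons a w : word_inv (a :: w) = word_inv w ++ [letter_inv a].
Proof. reflexivity. Qed.

Lemma word_inv_app u v : word_inv (u ++ v) = word_inv v ++ word_inv u.
Proof. unfold word_inv. rewrite map_app, rev_app_distr. reflexivity. Qed.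

Lemma word_invK w : word_inv (word_inv w) = w.
Proof.
  unfold word_inv. rewrite map_rev, rev_involutive, map_map.
  rewrite (map_ext _ (fun x => x)) by apply letter_invK. apply map_id.
Qed.

Lemma length_word_inv w : length (word_inv w) = length w.
Proof. unfold word_inv. rewrite length_rev, length_map. reflexivity. Qed.

Lemma word_inv_repeat a N : word_inv (repeat a N) = repeat (letter_inv a) N.
Proof. unfold word_inv. rewrite map_repeat, rev_repeat. reflexivity. Qed.

Lemma cancels_iff x y : cancels x y <-> y = letter_inv x.
Proof.
  destruct x as [i s], y as [j t]. unfold cancels, letter_inv. simpl.
  destruct s, t; split; intros H; try (inversion H; subst); intuition congruence.
Qed.

Lemma cancels_inv x y : cancels (letter_inv x) (letter_inv y) <-> cancels y x.
Proof.
  destruct x as [i s], y as [j t]. unfold cancels, letter_inv. simpl.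
  destruct s, t; simpl; intuition congruence.
Qed.

Lemma reduced_cons a w :
  reduced_word (a :: w) <->
  (match w with [] => True | c :: _ => ~ cancels a c end) /\ reduced_word w.
Proof. reflexivity. Qed.

Lemma reduced_app u v :
  reduced_word (u ++ v) <-> reduced_word u /\ reduced_word v /\ reduced_junction u v.
Proof.
  induction u as [|a u IH].
  - unfold reduced_junction. simpl. tauto.
  - simpl app. rewrite !reduced_cons, IH.
    destruct u as [|c u'].
    + unfold reduced_junction. destruct v; simpl; tauto.
    + assert (Hj : reduced_junction (a :: c :: u') v <-> reduced_junction (c :: u') v).
      { unfold reduced_junction. simpl rev. rewrite <- !app_assoc. simpl.
        destruct (rev u'); simpl; tauto. }
      rewrite Hj. simpl. tauto.
Qed.

Lemma reduced_word_inv w : reduced_word w -> reduced_word (word_inv w).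
Proof.
  induction w as [|a w IH]; intros H; [exact I|].
  apply reduced_cons in H as [Ha Hw].
  rewrite word_inv_cons. apply reduced_app. split; [auto|]. split; [exact (conj I I)|].
  unfold reduced_junction, word_inv at 1. rewrite rev_involutive.
  destruct w as [|c w]; simpl; [exact I|]. rewrite cancels_inv. exact Ha.
Qed.

Lemma reduced_repeat a N : reduced_word (repeat a N).
Proof.
  induction N as [|N IH]; [exact I|]. split; [|exact IH].
  destruct N; [exact I|]. intros [_ H]. auto.
Qed.

Lemma reduced_app_cancel a b : reduced_word a -> reduced_word b ->
  exists a' s b', a = a' ++ s /\ b = word_inv s ++ b' /\ reduced_word (a' ++ b').
Proof.
  revert b. induction a as [|x a IH] using rev_ind; intros b Ha Hb.
  - exists [], [], b. auto.
  - pose proof Ha as Ha'. apply reduced_app in Ha as [Ha [_ _]].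
    destruct b as [|y b].
    + exists (a ++ [x]), [], []. rewrite !app_nil_r. auto.
    + destruct (classic (cancels x y)) as [Hc|Hc].
      * apply cancels_iff in Hc. subst y.
        destruct (IH b Ha (proj2 Hb)) as (a'' & s & b' & -> & -> & Hr).
        exists a'', (s ++ [x]), b'. rewrite word_inv_app, <- app_assoc. auto.
      * exists (a ++ [x]), [], (y :: b). rewrite app_nil_r. split; [reflexivity|].
        split; [reflexivity|]. apply reduced_app. split; [exact Ha'|]. split; [exact Hb|].
        unfold reduced_junction. rewrite rev_app_distr. exact Hc.
Qed.

Section FreeGroup.
Variable G : grp.
Variable n : nat.
Variable b : nat -> G.
Hypothesis Hfb : free_basis G n b.
Local Notation "x * y" := (gmul G x y).
Local Notation inv := (ginv G).
Local Notation e := (gone G).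
Local Notation eval := (word_eval G b).
Local Notation lval := (letter_val G b).

Definition word_on (w : list letter) : Prop := forall a, In a w -> fst a < n.

Definition normal_form (g : G) (w : list letter) : Prop :=
  word_on w /\ reduced_word w /\ eval w = g.

Definition nf (g : G) : list letter :=
  proj1_sig (constructive_indefinite_description _
    (match Hfb g with ex_intro _ w (conj H _) => ex_intro (normal_form g) w H end)).

Lemma nf_spec g : normal_form g (nf g).
Proof. unfold nf. destruct constructive_indefinite_description as [w Hw]. exact Hw. Qed.

Lemma nf_unique g w : normal_form g w -> w = nf g.
Proof.
  intro Hw. destruct (Hfb g) as [w0 [_ Hu]].
  rewrite <- (Hu w Hw). apply Hu, nf_spec.
Qed.

Lemma eval_nf g : eval (nf g) = g.
Proof. apply nf_spec. Qed.

Lemma nf_on g : word_on (nf g).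
Proof. apply nf_spec. Qed.

Lemma nf_reduced g : reduced_word (nf g).
Proof. apply nf_spec. Qed.

Lemma word_on_app u v : word_on (u ++ v) <-> word_on u /\ word_on v.
Proof.
  unfold word_on. split.
  - intros H. split; intros a Ha; apply H, in_or_app; auto.
  - intros [Hu Hv] a Ha. apply in_app_or in Ha as [Ha|Ha]; auto.
Qed.

Lemma word_on_inv w : word_on w -> word_on (word_inv w).
Proof.
  intros H a Ha. apply in_rev, in_map_iff in Ha as [x [<- Hx]]. exact (H x Hx).
Qed.

Lemma word_on_repeat i s N : i < n -> word_on (repeat (i, s) N).
Proof. intros Hi a Ha. apply repeat_spec in Ha. subst a. exact Hi. Qed.

Lemma eval_app u v : eval (u ++ v) = eval u * eval v.
Proof. unfold word_eval. rewrite map_app. apply gprod_app. Qed.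

Lemma eval_cons a w : eval (a :: w) = lval a * eval w.
Proof. reflexivity. Qed.

Lemma eval_letter a : eval [a] = lval a.
Proof. apply gmul1r. Qed.

Lemma letter_val_inv a : lval (letter_inv a) = inv (lval a).
Proof. destruct a as [i [|]]; unfold letter_val, letter_inv; simpl; auto using ginvK. Qed.

Lemma eval_word_inv w : eval (word_inv w) = inv (eval w).
Proof.
  induction w as [|a w IH].
  - symmetry. apply ginv1.
  - rewrite word_inv_cons, eval_app, IH, eval_letter, eval_cons, ginvM, letter_val_inv.
    reflexivity.
Qed.

Lemma nf1 : nf e = [].
Proof. symmetry. apply nf_unique. split; [intros a []|]. split; [exact I|reflexivity]. Qed.

Lemma nf_inv g : nf (inv g) = word_inv (nf g).
Proof.
  symmetry. apply nf_unique. split; [apply word_on_inv, nf_on|].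
  split; [apply reduced_word_inv, nf_reduced|]. rewrite eval_word_inv, eval_nf. reflexivity.
Qed.

Lemma nf_mul g h : exists a s c,
  nf g = a ++ s /\ nf h = word_inv s ++ c /\ nf (g * h) = a ++ c.
Proof.
  destruct (reduced_app_cancel _ _ (nf_reduced g) (nf_reduced h)) as (a & s & c & Eg & Eh & Hr).
  exists a, s, c. split; [exact Eg|]. split; [exact Eh|]. symmetry. apply nf_unique.
  pose proof (nf_on g) as Hg. pose proof (nf_on h) as Hh.
  rewrite Eg, word_on_app in Hg. rewrite Eh, word_on_app in Hh.
  split; [apply word_on_app; tauto|]. split; [exact Hr|].
  rewrite <- (eval_nf g), <- (eval_nf h), Eg, Eh, !eval_app, eval_word_inv, <- gmulA, gmulKVl.
  reflexivity.
Qed.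

Lemma nf_mul_junction g h : reduced_junction (nf g) (nf h) -> nf (g * h) = nf g ++ nf h.
Proof.
  intro J. symmetry. apply nf_unique. split; [apply word_on_app; split; apply nf_on|].
  split; [apply reduced_app; auto using nf_reduced|].
  rewrite eval_app, !eval_nf. reflexivity.
Qed.

Definition wlen (g : G) : nat := length (nf g).

Lemma wlen1 : wlen e = 0.
Proof. unfold wlen. rewrite nf1. reflexivity. Qed.

Lemma wlen_mul g h : wlen (g * h) <= wlen g + wlen h.
Proof.
  unfold wlen. destruct (nf_mul g h) as (a & s & c & -> & -> & ->).
  rewrite !length_app. lia.
Qed.

Lemma hd_nf_wlen_pos g : 0 < wlen g -> exists l, hd_error (nf g) = Some l.
Proof. unfold wlen. destruct (nf g) as [|l t]; simpl; [lia|eauto]. Qed.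

Lemma wlen_inv_mul_heads x y l1 l2 :
  hd_error (nf x) = Some l1 -> hd_error (nf y) = Some l2 -> l1 <> l2 ->
  wlen (inv x * y) = wlen x + wlen y.
Proof.
  intros Ex Ey D. unfold wlen. rewrite nf_mul_junction.
  - rewrite length_app, nf_inv, length_word_inv. reflexivity.
  - rewrite nf_inv. unfold reduced_junction, word_inv. rewrite rev_involutive.
    destruct (nf x) as [|a1 t1], (nf y) as [|a2 t2]; try discriminate.
    injection Ex as ->. injection Ey as ->. simpl. rewrite cancels_iff, letter_invK. auto.
Qed.

Lemma nf_repeat i s N : i < n -> nf (eval (repeat (i, s) N)) = repeat (i, s) N.
Proof.
  intro Hi. symmetry. apply nf_unique.
  split; [apply word_on_repeat, Hi|]. split; [apply reduced_repeat|reflexivity].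
Qed.

Lemma eval_repeat_neq1 i s N : i < n -> 0 < N -> eval (repeat (i, s) N) <> e.
Proof.
  intros Hi HN E. pose proof (nf_repeat i s N Hi) as Hr. rewrite E, nf1 in Hr.
  destruct N; [lia|discriminate].
Qed.

Lemma nf_repeat_mul_head i s N c : i < n -> wlen c < N ->
  exists t, nf (eval (repeat (i, s) N) * c) = (i, s) :: t.
Proof.
  intros Hi HN. destruct (nf_mul (eval (repeat (i, s) N)) c) as (a & s' & c' & E1 & E2 & ->).
  rewrite nf_repeat in E1 by exact Hi.
  assert (Ls : length s' <= wlen c).
  { unfold wlen. rewrite E2, length_app, length_word_inv. lia. }
  assert (La : length a + length s' = N).
  { rewrite <- length_app, <- E1. apply repeat_length. }
  destruct a as [|y a]; [simpl in La; lia|].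
  assert (y = (i, s)) as ->.
  { apply (repeat_spec N). rewrite E1. left. reflexivity. }
  exists (a ++ c'). reflexivity.
Qed.

Lemma nf_letter_mul i s y l t : i < n -> nf y = l :: t -> fst l <> i ->
  nf (lval (i, s) * y) = (i, s) :: l :: t.
Proof.
  intros Hi Ey Hl. rewrite <- eval_letter.
  change [(i, s)] with (repeat (i, s) 1).
  rewrite nf_mul_junction; rewrite nf_repeat, Ey by exact Hi.
  - reflexivity.
  - intros [H _]. auto.
Qed.

End FreeGroup.

Section Series.
Local Open Scope Z_scope.

Definition series := list nat -> Z.

Definition ser1 : series := fun w => match w with [] => 1 | _ => 0 end.

Definition ser_shift (a : nat) (f : series) : series := fun u => f (a :: u).

(** The product of formal power series in the noncommuting variables [X_a]:
    [(f g)(w)] sums [f u * g v] over all factorisations [w = u ++ v]. *)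
Fixpoint ser_mul (f g : series) (w : list nat) : Z :=
  match w with
  | [] => f [] * g []
  | a :: w' => f [] * g (a :: w') + ser_mul (ser_shift a f) g w'
  end.

Lemma ser_mul0l w f g : (forall u, f u = 0) -> ser_mul f g w = 0.
Proof.
  revert f. induction w as [|a w IH]; intros f Hf; cbn [ser_mul].
  - rewrite Hf. ring.
  - rewrite Hf, IH; [ring|]. intro u. apply Hf.
Qed.

Lemma ser_mul1l g : ser_mul ser1 g = g.
Proof.
  extensionality w. destruct w as [|a w]; cbn [ser_mul ser1].
  - ring.
  - rewrite ser_mul0l; [ring|reflexivity].
Qed.

Lemma ser_mul1r f : ser_mul f ser1 = f.
Proof.
  extensionality w. revert f. induction w as [|a w IH]; intro f; cbn [ser_mul ser1]; [ring|].
  rewrite IH. unfold ser_shift. ring.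
Qed.

Lemma ser_mul_linear_l w (F f f' g : series) (x : Z) :
  (forall u, F u = x * f u + f' u) -> ser_mul F g w = x * ser_mul f g w + ser_mul f' g w.
Proof.
  revert F f f'. induction w as [|a w IH]; intros F f f' HF; cbn [ser_mul].
  - rewrite HF. ring.
  - rewrite HF, (IH (ser_shift a F) (ser_shift a f) (ser_shift a f')); [ring|].
    intro u. apply HF.
Qed.

Lemma ser_mulA f g h : ser_mul (ser_mul f g) h = ser_mul f (ser_mul g h).
Proof.
  extensionality w. revert f g. induction w as [|a w IH]; intros f g; cbn [ser_mul]; [ring|].
  rewrite (ser_mul_linear_l w _ (ser_shift a g) (ser_mul (ser_shift a f) g) h (f []))
    by reflexivity.
  rewrite IH. ring.
Qed.

Definition alt_sign (k : nat) : Z := if Nat.even k then 1 else -1.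

(** Magnus' substitution: [b_i] becomes [1 + X_i] and [b_i^-1] becomes
    [1 - X_i + X_i^2 - ...]. *)
Definition letter_series (l : letter) : series :=
  if snd l then
    fun w => match w with
             | [] => 1
             | [a] => if Nat.eqb a (fst l) then 1 else 0
             | _ => 0
             end
  else fun w => if forallb (Nat.eqb (fst l)) w then alt_sign (length w) else 0.

Lemma letter_series_nil l : letter_series l [] = 1.
Proof. destruct l as [i []]; reflexivity. Qed.

Lemma letter_series_pos_cons i a w :
  letter_series (i, true) (a :: w) = if Nat.eqb a i then ser1 w else 0.
Proof. unfold letter_series. destruct w; simpl; destruct (Nat.eqb a i); reflexivity. Qed.

Lemma letter_series_neg_cons i a w :
  letter_series (i, false) (a :: w) =
  if Nat.eqb a i then - letter_series (i, false) w else 0.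
Proof.
  unfold letter_series. simpl. rewrite Nat.eqb_sym. destruct (Nat.eqb a i); [|reflexivity].
  simpl. destruct (forallb (Nat.eqb i) w); [|reflexivity].
  unfold alt_sign. rewrite Nat.even_succ, <- Nat.negb_even.
  destruct (Nat.even (length w)); reflexivity.
Qed.

Lemma letter_series_inv_r l : ser_mul (letter_series l) (letter_series (letter_inv l)) = ser1.
Proof.
  extensionality w. destruct l as [i []]; unfold letter_inv; simpl negb; simpl fst.
  - destruct w as [|a w]; [reflexivity|]. cbn [ser_mul ser1]. rewrite letter_series_nil.
    rewrite (ser_mul_linear_l w _ ser1 (fun _ => 0) _ (if Nat.eqb a i then 1 else 0)).
    + rewrite ser_mul1l, ser_mul0l, letter_series_neg_cons by reflexivity.
      destruct (Nat.eqb a i); ring.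
    + intro u. unfold ser_shift. rewrite letter_series_pos_cons. destruct (Nat.eqb a i); ring.
  - induction w as [|a w IH]; [reflexivity|]. cbn [ser_mul ser1]. rewrite letter_series_nil.
    rewrite (ser_mul_linear_l w _ (letter_series (i, false)) (fun _ => 0) _
               (if Nat.eqb a i then -1 else 0)).
    + rewrite IH, ser_mul0l, letter_series_pos_cons by reflexivity.
      destruct w, (Nat.eqb a i); cbn [ser1]; ring.
    + intro u. unfold ser_shift. rewrite letter_series_neg_cons. destruct (Nat.eqb a i); ring.
Qed.

Definition magnus (w : list letter) : series :=
  fold_right (fun l acc => ser_mul (letter_series l) acc) ser1 w.

Lemma magnus_app w1 w2 : magnus (w1 ++ w2) = ser_mul (magnus w1) (magnus w2).
Proof.
  induction w1 as [|l w1 IH]; simpl.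
  - rewrite ser_mul1l. reflexivity.
  - rewrite IH, ser_mulA. reflexivity.
Qed.

Lemma magnus_cancel s w : magnus (s ++ word_inv s ++ w) = magnus w.
Proof.
  revert w. induction s as [|x s IH]; intro w; [reflexivity|].
  rewrite word_inv_cons, <- !app_assoc. simpl. rewrite IH. simpl.
  rewrite <- ser_mulA, letter_series_inv_r, ser_mul1l. reflexivity.
Qed.

Lemma magnus_nil w : magnus w [] = 1.
Proof.
  induction w as [|l w IH]; [reflexivity|]. simpl. rewrite IH, letter_series_nil. ring.
Qed.

End Series.

Section ShortLex.

Fixpoint lex_lt (u v : list nat) : Prop :=
  match u, v with
  | a :: u', b :: v' => a < b \/ (a = b /\ lex_lt u' v')
  | _, _ => False
  end.

Definition shortlex_lt (u v : list nat) : Prop :=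
  length u < length v \/ (length u = length v /\ lex_lt u v).

Lemma lex_lt_trans u v w : lex_lt u v -> lex_lt v w -> lex_lt u w.
Proof.
  revert v w. induction u as [|a u IH]; intros [|b v] [|c w]; simpl; try tauto.
  intros [H1|[-> H1]] [H2|[-> H2]]; try (left; lia). right. eauto.
Qed.

Lemma lex_lt_total u v : length u = length v -> u = v \/ lex_lt u v \/ lex_lt v u.
Proof.
  revert v. induction u as [|a u IH]; intros [|b v] E; simpl in *; try discriminate; auto.
  destruct (lt_eq_lt_dec a b) as [[H|<-]|H]; auto.
  destruct (IH v) as [<-|[H|H]]; auto.
Qed.

Lemma shortlex_lt_trans u v w : shortlex_lt u v -> shortlex_lt v w -> shortlex_lt u w.
Proof.
  unfold shortlex_lt. intros [H1|[E1 H1]] [H2|[E2 H2]]; try (left; lia).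
  right. split; [lia|eauto using lex_lt_trans].
Qed.

Lemma shortlex_lt_total u v : u = v \/ shortlex_lt u v \/ shortlex_lt v u.
Proof.
  unfold shortlex_lt. destruct (lt_eq_lt_dec (length u) (length v)) as [[H|H]|H]; auto.
  destruct (lex_lt_total u v H) as [->|[H'|H']]; auto.
Qed.

Lemma shortlex_lt_length u v : shortlex_lt u v -> length u <= length v.
Proof. intros [H|[H _]]; lia. Qed.

Lemma nat_least (A : nat -> Prop) : (exists k, A k) -> exists k, A k /\ forall j, A j -> k <= j.
Proof.
  intro H. destruct (dec_inh_nat_subset_has_unique_least_element A (fun k => classic (A k)) H)
    as [k [[Hk Hmin] _]].
  eauto.
Qed.

Lemma lex_least k (Q : list nat -> Prop) : (exists w, length w = k /\ Q w) ->
  exists w, length w = k /\ Q w /\ forall v, length v = k -> lex_lt v w -> ~ Q v.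
Proof.
  revert Q. induction k as [|k IH]; intros Q [w [Hl Hw]].
  - destruct w; [|discriminate]. exists []. split; [reflexivity|]. split; [exact Hw|].
    intros [|] _ [].
  - destruct (nat_least (fun a => exists t, length t = k /\ Q (a :: t))) as [a [Ha Hmin]].
    { destruct w as [|a t]; [discriminate|]. exists a, t. auto. }
    destruct (IH (fun t => Q (a :: t)) Ha) as [t [Ht [Qt Htmin]]].
    exists (a :: t). split; [simpl; congruence|]. split; [exact Qt|].
    intros [|c v] Hv Hlt; [contradiction|]. injection Hv as Hv.
    destruct Hlt as [Hlt|[-> Hlt]].
    + intro Qv. specialize (Hmin c (ex_intro _ v (conj Hv Qv))). lia.
    + auto.
Qed.

Lemma shortlex_least (Q : list nat -> Prop) : (exists w, Q w) ->
  exists w, Q w /\ forall v, shortlex_lt v w -> ~ Q v.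
Proof.
  intros [w Hw].
  destruct (nat_least (fun k => exists w, length w = k /\ Q w)) as [k [Hk Hkmin]]; [eauto|].
  destruct (lex_least k Q Hk) as [w0 [Hl [Qw Hmin]]].
  exists w0. split; [exact Qw|]. intros v [H|[H1 H2]] Qv.
  - specialize (Hkmin (length v) (ex_intro _ v (conj eq_refl Qv))). lia.
  - apply (Hmin v); congruence.
Qed.

End ShortLex.

Section LeadingTerms.
Local Open Scope Z_scope.

Definition leading (sg : Z) (f : series) : Prop :=
  exists w, w <> [] /\ 0 < sg * f w /\ forall v, v <> [] -> shortlex_lt v w -> f v = 0.

Lemma not_leading_ser1 sg : ~ leading sg ser1.
Proof. intros [[|a w] [H1 [H2 _]]]; [congruence|]. simpl in H2. lia. Qed.

Lemma ser_mul_short_factors v f g : v <> [] ->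
  (forall u t, u <> [] -> t <> [] -> u ++ t = v -> f u = 0) ->
  ser_mul f g v = f [] * g v + f v * g [].
Proof.
  revert f. induction v as [|a w IH]; intros f Hv Hf; [congruence|].
  cbn [ser_mul]. destruct w as [|c w].
  - reflexivity.
  - rewrite IH; try congruence.
    + unfold ser_shift. rewrite (Hf [a] (c :: w)); [ring|congruence|congruence|reflexivity].
    + intros u t Hu Ht E. apply (Hf (a :: u) t); [congruence|exact Ht|]. rewrite <- E. reflexivity.
Qed.

(** Below the shortlex-smaller of the two leading words, [f g] is [f + g - 1]. *)
Lemma leading_mul sg f g : f [] = 1 -> g [] = 1 ->
  leading sg f -> leading sg g -> leading sg (ser_mul f g).
Proof.
  intros F0 G0 [w1 [N1 [P1 Z1]]] [w2 [N2 [P2 Z2]]].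
  assert (Hsum : forall v, v <> [] -> (length v <= length w1)%nat -> (length v <= length w2)%nat ->
            ser_mul f g v = f v + g v).
  { intros v Hv L1 L2. rewrite ser_mul_short_factors, F0, G0; [ring|exact Hv|].
    intros u t Hu Ht E. apply Z1; [exact Hu|]. left.
    subst v. rewrite length_app in L1. destruct t; [congruence|]. simpl in L1. lia. }
  assert (Hlow : forall w, w <> [] -> (w = w1 \/ shortlex_lt w w1) ->
            (w = w2 \/ shortlex_lt w w2) -> 0 < sg * (f w + g w) -> leading sg (ser_mul f g)).
  { intros w Nw H1 H2 Pw.
    assert (L1 : (length w <= length w1)%nat)
      by (destruct H1 as [->|H1]; [lia|apply shortlex_lt_length, H1]).
    assert (L2 : (length w <= length w2)%nat)
      by (destruct H2 as [->|H2]; [lia|apply shortlex_lt_length, H2]).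
    exists w. split; [exact Nw|]. rewrite Hsum by assumption. split; [exact Pw|].
    intros v Nv Hv.
    assert (V1 : shortlex_lt v w1) by (destruct H1 as [<-|H1]; eauto using shortlex_lt_trans).
    assert (V2 : shortlex_lt v w2) by (destruct H2 as [<-|H2]; eauto using shortlex_lt_trans).
    rewrite Hsum, Z1, Z2 by auto using shortlex_lt_length. reflexivity. }
  destruct (shortlex_lt_total w1 w2) as [<-|[H|H]].
  - apply (Hlow w1); auto. nia.
  - apply (Hlow w1); auto. rewrite (Z2 w1) by assumption. lia.
  - apply (Hlow w2); auto. rewrite (Z1 w2) by assumption. lia.
Qed.

Lemma leading_pos_or_neg f : (exists v, v <> [] /\ f v <> 0) -> leading 1 f \/ leading (-1) f.
Proof.
  intro H. destruct (shortlex_least (fun v => v <> [] /\ f v <> 0) H) as [w [[Hw Fw] Hmin]].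
  assert (Hz : forall v, v <> [] -> shortlex_lt v w -> f v = 0).
  { intros v Hv Hs. apply NNPP. intro Hf. exact (Hmin v Hs (conj Hv Hf)). }
  destruct (Z_lt_le_dec 0 (f w)); [left|right]; exists w; repeat split; auto; lia.
Qed.

End LeadingTerms.

Section MagnusInjective.
Local Open Scope Z_scope.

Definition head_neq (i : nat) (t : list nat) : Prop :=
  match t with a :: _ => a <> i | [] => True end.

Fixpoint alternating (t : list nat) : Prop :=
  match t with a :: t' => head_neq a t' /\ alternating t' | [] => True end.

Definition bool_sign (s : bool) : Z := if s then 1 else -1.

Lemma letter_series_neg_mul_head_neq i g t :
  head_neq i t -> ser_mul (letter_series (i, false)) g t = g t.
Proof.
  destruct t as [|a t]; intro H; cbn [ser_mul]; rewrite letter_series_nil; [ring|].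
  rewrite ser_mul0l; [ring|]. intro u. unfold ser_shift. rewrite letter_series_neg_cons.
  destruct (Nat.eqb_spec a i); [contradiction|reflexivity].
Qed.

Lemma magnus_coeff_step l w a t : (a = fst l -> head_neq (fst l) t) ->
  magnus (l :: w) (a :: t) =
  magnus w (a :: t) + (if Nat.eqb a (fst l) then bool_sign (snd l) * magnus w t else 0).
Proof.
  intro Hh. simpl magnus. destruct l as [i []]; simpl fst in *; cbn [ser_mul snd bool_sign];
    rewrite letter_series_nil.
  - rewrite (ser_mul_linear_l t _ ser1 (fun _ => 0) _ (if Nat.eqb a i then 1 else 0)).
    + rewrite ser_mul1l, ser_mul0l by reflexivity. destruct (Nat.eqb a i); ring.
    + intro u. unfold ser_shift. rewrite letter_series_pos_cons. destruct (Nat.eqb a i); ring.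
  - rewrite (ser_mul_linear_l t _ (letter_series (i, false)) (fun _ => 0) _
               (if Nat.eqb a i then -1 else 0)).
    + rewrite (ser_mul0l t (fun _ => 0)) by reflexivity.
      destruct (Nat.eqb_spec a i); [|ring].
      rewrite letter_series_neg_mul_head_neq by auto. ring.
    + intro u. unfold ser_shift. rewrite letter_series_neg_cons. destruct (Nat.eqb a i); ring.
Qed.

Lemma magnus_coeff_step_eq l w t : head_neq (fst l) t ->
  magnus (l :: w) (fst l :: t) = magnus w (fst l :: t) + bool_sign (snd l) * magnus w t.
Proof. intro H. rewrite magnus_coeff_step, Nat.eqb_refl by auto. reflexivity. Qed.

Lemma magnus_coeff_head_neq l w t : head_neq (fst l) t -> magnus (l :: w) t = magnus w t.
Proof.
  destruct t as [|a t]; intro H.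
  - rewrite !magnus_nil. reflexivity.
  - rewrite magnus_coeff_step by congruence. simpl in H.
    destruct (Nat.eqb_spec a (fst l)); [contradiction|ring].
Qed.

(** The generators of the successive syllables (maximal powers of one generator) of a word. *)
Fixpoint syllables (w : list letter) : list nat :=
  match w with
  | [] => []
  | l :: w' =>
      match w' with
      | l' :: _ => if Nat.eqb (fst l) (fst l') then syllables w' else fst l :: syllables w'
      | [] => [fst l]
      end
  end.

Definition starts_with (i : nat) (w : list letter) : Prop :=
  match w with l :: _ => fst l = i | [] => False end.

Lemma syllables_same l w : starts_with (fst l) w -> syllables (l :: w) = syllables w.
Proof.
  destruct w as [|l' w]; simpl; intro H; [contradiction|]. rewrite H, Nat.eqb_refl. reflexivity.
Qed.

Lemma syllables_diff l w : ~ starts_with (fst l) w -> syllables (l :: w) = fst l :: syllables w.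
Proof.
  destruct w as [|l' w]; simpl; intro H; [reflexivity|].
  destruct (Nat.eqb_spec (fst l) (fst l')); [congruence|reflexivity].
Qed.

Lemma syllables_cons l w : syllables (l :: w) = fst l :: tl (syllables (l :: w)).
Proof.
  revert l. induction w as [|l' w IH]; intro l; [reflexivity|].
  destruct (classic (starts_with (fst l) (l' :: w))) as [H|H].
  - rewrite syllables_same by exact H. simpl in H. rewrite IH, H. reflexivity.
  - rewrite syllables_diff by exact H. reflexivity.
Qed.

Lemma syllables_head_neq i w : ~ starts_with i w -> head_neq i (syllables w).
Proof.
  destruct w as [|l w]; intro H; [exact I|]. rewrite syllables_cons. exact H.
Qed.

Lemma syllables_alternating w : alternating (syllables w).
Proof.
  induction w as [|l w IH]; [exact I|].
  destruct (classic (starts_with (fst l) w)) as [H|H].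
  - rewrite syllables_same; auto.
  - rewrite syllables_diff by exact H. split; [apply syllables_head_neq, H|exact IH].
Qed.

Lemma magnus_coeff_vanish w : reduced_word w ->
  (forall t, alternating t -> (length (syllables w) <= length t)%nat -> t <> syllables w ->
     magnus w t = 0) /\
  (forall i t, starts_with i w -> head_neq i t -> alternating t ->
     (length (syllables w) <= length t + 1)%nat -> t <> tl (syllables w) -> magnus w t = 0).
Proof.
  induction w as [|l w IH]; intros Hr.
  - split; [|intros i t []]. intros [|a t] _ _ Ht; [now elim Ht|reflexivity].
  - destruct (IH (proj2 Hr)) as [IH1 IH2]. split.
    + intros [|a t] Ht Hl Hne.
      { rewrite syllables_cons in Hl. simpl in Hl. lia. }
      destruct Ht as [Hh Ht].
      rewrite magnus_coeff_step by (intros ->; exact Hh).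
      destruct (classic (starts_with (fst l) w)) as [Hs|Hs].
      * rewrite syllables_same in Hl, Hne by exact Hs.
        rewrite IH1 by (try split; assumption).
        destruct (Nat.eqb_spec a (fst l)) as [->|]; [|ring].
        rewrite (IH2 (fst l) t); try assumption; [ring|simpl in Hl; lia|].
        intros ->. apply Hne. destruct w as [|l' w]; [contradiction|].
        rewrite syllables_cons. simpl in Hs. rewrite Hs. reflexivity.
      * rewrite syllables_diff in Hl, Hne by exact Hs. simpl in Hl.
        rewrite (IH1 (a :: t)); [| split; assumption | simpl; lia |].
        2: { intros E. rewrite <- E in Hl. simpl in Hl. lia. }
        destruct (Nat.eqb_spec a (fst l)) as [->|]; [|ring].
        rewrite (IH1 t); [ring|assumption|lia|]. intros ->. auto.
    + intros i t Hs0 Hh Ht Hl Hne. simpl in Hs0. subst i.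
      rewrite magnus_coeff_head_neq by exact Hh.
      destruct w as [|l' w].
      { destruct t; [rewrite syllables_cons in Hne; contradiction|reflexivity]. }
      destruct (classic (starts_with (fst l) (l' :: w))) as [Hs|Hs].
      * rewrite syllables_same in Hl, Hne by exact Hs.
        apply (IH2 (fst l)); auto.
      * rewrite syllables_diff in Hl, Hne by exact Hs. cbn [length tl] in Hl, Hne.
        apply IH1; auto. lia.
Qed.

Lemma magnus_coeff_syllables l w : reduced_word (l :: w) ->
  exists k, 0 < k /\
    magnus (l :: w) (syllables (l :: w)) =
      bool_sign (snd l) * k * magnus (l :: w) (tl (syllables (l :: w))) /\
    magnus (l :: w) (tl (syllables (l :: w))) <> 0.
Proof.
  revert l. induction w as [|l' w IH]; intros l Hr.
  - exists 1. cbn [syllables tl magnus fold_right]. rewrite ser_mul1r, letter_series_nil.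
    destruct l as [i []]; unfold letter_series; simpl; rewrite Nat.eqb_refl; simpl;
      repeat split; try reflexivity; lia.
  - assert (Htl : head_neq (fst l) (tl (syllables (l :: l' :: w)))).
    { pose proof (syllables_alternating (l :: l' :: w)) as A. rewrite syllables_cons in A.
      exact (proj1 A). }
    rewrite (magnus_coeff_head_neq l _ _ Htl).
    pose proof (magnus_coeff_step_eq l (l' :: w) _ Htl) as Ec.
    rewrite <- syllables_cons in Ec. rewrite Ec.
    destruct (IH l' (proj2 Hr)) as [k [Hk [Hc Hd]]].
    destruct (classic (starts_with (fst l) (l' :: w))) as [Hs|Hs].
    + assert (Sg : snd l' = snd l).
      { destruct Hr as [Hc' _]. simpl in Hs. unfold cancels in Hc'.
        destruct (snd l'), (snd l); auto; exfalso; apply Hc'; split; congruence. }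
      rewrite syllables_same by exact Hs. simpl in Hs.
      exists (k + 1). split; [lia|]. split; [|exact Hd].
      rewrite Hc, Sg. ring.
    + rewrite syllables_diff by exact Hs. cbn [tl].
      rewrite (proj1 (magnus_coeff_vanish (l' :: w) (proj2 Hr)) (fst l :: syllables (l' :: w))).
      * exists 1. split; [lia|]. split; [ring|].
        rewrite Hc. unfold bool_sign. destruct (snd l'); nia.
      * split; [apply syllables_head_neq, Hs|apply syllables_alternating].
      * simpl. lia.
      * intro E. apply (f_equal (@length nat)) in E. simpl in E. lia.
Qed.

Lemma magnus_nontrivial w : reduced_word w -> w <> [] -> exists v, v <> [] /\ magnus w v <> 0.
Proof.
  intros Hr Hw. destruct w as [|l w]; [congruence|].
  destruct (magnus_coeff_syllables l w Hr) as [k [Hk [Hc Hd]]].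
  exists (syllables (l :: w)). split; [rewrite syllables_cons; congruence|].
  rewrite Hc. unfold bool_sign. destruct (snd l); nia.
Qed.

End MagnusInjective.

Section FreeLeftOrder.
Variable G : grp.
Variable n : nat.
Variable b : nat -> G.
Hypothesis Hfb : free_basis G n b.
Local Notation "x * y" := (gmul G x y).
Local Notation inv := (ginv G).
Local Notation e := (gone G).
Local Notation nf := (nf G n b Hfb).

Definition magnus_elt (g : G) : series := magnus (nf g).

Lemma magnus_elt_mul g h : magnus_elt (g * h) = ser_mul (magnus_elt g) (magnus_elt h).
Proof.
  unfold magnus_elt. destruct (nf_mul G n b Hfb g h) as (a & s & c & -> & -> & ->).
  rewrite <- magnus_app, <- app_assoc, !(magnus_app a), magnus_cancel. reflexivity.
Qed.

Lemma magnus_elt_nil g : magnus_elt g [] = 1%Z.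
Proof. apply magnus_nil. Qed.

Lemma magnus_elt1 : magnus_elt e = ser1.
Proof. unfold magnus_elt. rewrite nf1. reflexivity. Qed.

Lemma magnus_elt_nontrivial g : g <> e -> exists v, v <> [] /\ magnus_elt g v <> 0%Z.
Proof.
  intro Hg. apply magnus_nontrivial; [apply nf_reduced|].
  intro E. apply Hg. rewrite <- (eval_nf G n b Hfb g), E. reflexivity.
Qed.

Definition magnus_cone (g : G) : Prop := leading 1 (magnus_elt g).

Lemma magnus_cone_mul x y : magnus_cone x -> magnus_cone y -> magnus_cone (x * y).
Proof.
  unfold magnus_cone. rewrite magnus_elt_mul. apply leading_mul; apply magnus_elt_nil.
Qed.

Lemma not_magnus_cone1 : ~ magnus_cone e.
Proof. unfold magnus_cone. rewrite magnus_elt1. apply not_leading_ser1. Qed.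

Lemma not_magnus_cone_inv g : ~ (magnus_cone g /\ magnus_cone (inv g)).
Proof.
  intros [H1 H2]. apply not_magnus_cone1. rewrite <- (gmulVr G g). auto using magnus_cone_mul.
Qed.

(** If neither [g] nor [g^-1] were positive, [magnus_elt 1 = magnus_elt g * magnus_elt g^-1]
    would have a negative leading coefficient. *)
Lemma magnus_cone_total g : magnus_cone g \/ magnus_cone (inv g) \/ g = e.
Proof.
  destruct (classic (g = e)) as [E|Ne]; [auto|].
  assert (Ne' : inv g <> e) by (intro E; apply Ne; rewrite <- (ginvK G g), E; apply ginv1).
  destruct (leading_pos_or_neg _ (magnus_elt_nontrivial g Ne)) as [H|H]; [auto|].
  destruct (leading_pos_or_neg _ (magnus_elt_nontrivial (inv g) Ne')) as [H'|H']; [auto|].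
  exfalso. apply (not_leading_ser1 (-1)). rewrite <- magnus_elt1, <- (gmulVr G g), magnus_elt_mul.
  apply leading_mul; auto using magnus_elt_nil.
Qed.

Lemma magnus_cone_positive_cone : positive_cone magnus_cone.
Proof.
  split; [exact magnus_cone_mul|]. split; [exact magnus_cone_total|].
  split; [exact not_magnus_cone_inv|].
  split; intros g [H ->]; apply not_magnus_cone1; [exact H|]. rewrite <- ginv1. exact H.
Qed.

End FreeLeftOrder.

Section Cones.
Variable G : grp.
Local Notation "x * y" := (gmul G x y).
Local Notation inv := (ginv G).
Local Notation e := (gone G).
Variable P : subset_of G.
Hypothesis HP : positive_cone P.

Lemma cone_sign g : g <> e -> P g \/ P (inv g).
Proof. intro Hg. destruct HP as [_ [Htri _]]. destruct (Htri g) as [H|[H|H]]; tauto. Qed.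

Lemma cone_conj_sign g c : g <> e -> P (inv c * (g * c)) \/ P (inv c * (inv g * c)).
Proof.
  intro Hg. replace (inv c * (inv g * c)) with (inv (inv c * (g * c)))
    by (rewrite !ginvM, ginvK, gmulA; reflexivity).
  apply cone_sign. intro E. apply Hg.
  assert (Hgc : g * c = c) by (rewrite <- (gmulKVl G c (g * c)), E, gmul1r; reflexivity).
  rewrite <- (gmul1r G g), <- (gmulVr G c), gmulA, Hgc. reflexivity.
Qed.

Lemma cone_upper_bound p0 : P p0 -> forall L : list G, exists c, forall x, In x L -> P (inv x * c).
Proof.
  intro Hp0. destruct HP as [Hmul [Htri _]].
  induction L as [|x L [c Hc]]; [exists e; intros x []|].
  destruct (classic (P (inv x * c))) as [Hx|Hx].
  - exists c. intros y [<-|Hy]; auto.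
  - exists (x * p0). intros y [<-|Hy]; [rewrite gmulKl; exact Hp0|].
    destruct (Htri (inv x * c)) as [H|[H|H]]; [contradiction| |].
    + rewrite ginvM, ginvK in H.
      replace (inv y * (x * p0)) with ((inv y * c) * ((inv c * x) * p0)) by
        (rewrite <- !gmulA; f_equal; apply gmulKVl).
      auto.
    + assert (x = c) as -> by (rewrite <- (gmulKVl G x c), H, gmul1r; reflexivity).
      rewrite gmulA. auto.
Qed.

End Cones.

Section Swamps.
Variable G : grp.
Variable n : nat.
Variable b : nat -> G.
Hypothesis Hfb : free_basis G n b.
Local Notation "x * y" := (gmul G x y).
Local Notation inv := (ginv G).
Local Notation e := (gone G).
Local Notation nf := (nf G n b Hfb).
Local Notation wlen := (wlen G n b Hfb).
Local Notation eval := (word_eval G b).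
Local Notation lval := (letter_val G b).

Definition letters : list letter := flat_map (fun i => [(i, true); (i, false)]) (seq 0 n).

Fixpoint words_of_length (k : nat) : list (list letter) :=
  match k with
  | 0 => [[]]
  | S k => flat_map (fun l => map (cons l) (words_of_length k)) letters
  end.

Definition ball (R : nat) : list G :=
  flat_map (fun k => map eval (words_of_length k)) (seq 0 (S R)).

Lemma in_letters a : fst a < n -> In a letters.
Proof.
  destruct a as [i s]. intro Hi. apply in_flat_map. exists i.
  split; [apply in_seq; simpl in *; lia|destruct s; simpl; auto].
Qed.

Lemma in_words_of_length w : word_on n w -> In w (words_of_length (length w)).
Proof.
  induction w as [|a w IH]; intro Hw; [left; reflexivity|].
  apply in_flat_map. exists a. split; [apply in_letters, Hw; left; reflexivity|].
  apply in_map, IH. intros x Hx. apply Hw. right. exact Hx.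
Qed.

Lemma in_ball R g : wlen g <= R -> In g (ball R).
Proof.
  intro Hg. apply in_flat_map. exists (wlen g). split; [apply in_seq; lia|].
  rewrite <- (eval_nf G n b Hfb g) at 1. apply in_map, in_words_of_length, nf_on.
Qed.

Lemma letters_generate : generates G (map lval letters).
Proof.
  intro g. exists (map lval (nf g)). split; [|apply eval_nf].
  intros x Hx. apply in_map_iff in Hx as [a [<- Ha]].
  apply in_map, in_letters, (nf_on G n b Hfb g), Ha.
Qed.

Definition gen_bound (X : list G) : nat := fold_right max 0 (map wlen X).

Lemma wlen_le_gen_bound X x : In x X -> wlen x <= gen_bound X.
Proof.
  unfold gen_bound. induction X as [|y X IH]; [intros []|]. cbn [map fold_right].
  intros [->|H]; [lia|]. specialize (IH H). lia.
Qed.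

Lemma dist_le_wlen X p q r : dist_le G X p q r -> wlen (inv p * q) <= r * gen_bound X.
Proof.
  intros [w [Hw [Hl <-]]]. transitivity (length w * gen_bound X)%nat; [|nia].
  clear Hl. induction w as [|x w IH]; simpl gprod; [rewrite wlen1; lia|].
  rewrite wlen_mul. simpl length.
  pose proof (wlen_le_gen_bound X x (Hw x (or_introl eq_refl))).
  assert (wlen (gprod G w) <= length w * gen_bound X)
    by (apply IH; intros y Hy; apply Hw; right; exact Hy).
  lia.
Qed.

Lemma cone_above_ball P : positive_cone P -> 0 < n ->
  forall R, exists c, forall g, wlen g <= R -> P (inv g * c).
Proof.
  intros HP Hn R.
  assert (Hp0 : exists p0, P p0).
  { destruct (cone_sign G P HP _ (eval_repeat_neq1 G n b Hfb 0 true 1 Hn Nat.lt_0_1)); eauto. }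
  destruct Hp0 as [p0 Hp0]. destruct (cone_upper_bound G P HP p0 Hp0 (ball R)) as [c Hc].
  exists c. intros g Hg. apply Hc, in_ball, Hg.
Qed.

Lemma last_cons_default (h : G) t d : last (h :: t) d = last t h.
Proof.
  revert h d. induction t as [|x t IH]; intros h d; [reflexivity|].
  change (last (x :: t) d = last (x :: t) h). rewrite !IH. reflexivity.
Qed.

Lemma conj_power_in_cone P c i : positive_cone P -> i < n ->
  exists s, P (inv c * (eval (repeat (i, s) (S (wlen c))) * c)) /\
            hd_error (nf (eval (repeat (i, s) (S (wlen c))) * c)) = Some (i, s).
Proof.
  intros HP Hi. set (N := S (wlen c)).
  assert (Hhead : forall s, hd_error (nf (eval (repeat (i, s) N) * c)) = Some (i, s)).
  { intro s. destruct (nf_repeat_mul_head G n b Hfb i s N c Hi (Nat.lt_succ_diag_r _)) as [t ->].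
    reflexivity. }
  destruct (cone_conj_sign G P HP (eval (repeat (i, true) N)) c) as [Hp|Hp].
  - apply (eval_repeat_neq1 G n b Hfb); [exact Hi|lia].
  - exists true. auto.
  - exists false. split; [|apply Hhead].
    change (repeat (i, false) N) with (repeat (letter_inv (i, true)) N).
    rewrite <- word_inv_repeat, eval_word_inv. exact Hp.
Qed.

Definition prefixes (w : list letter) : list (list letter) :=
  map (fun k => firstn k w) (seq 0 (S (length w))).

Lemma in_prefixes p t : In p (prefixes (p ++ t)).
Proof.
  apply in_map_iff. exists (length p). split.
  - rewrite firstn_app, Nat.sub_diag, firstn_all, app_nil_r. reflexivity.
  - apply in_seq. rewrite length_app. lia.
Qed.

Definition prefix_values (L : list G) : list G :=
  e :: flat_map (fun l => map eval (prefixes (nf l))) L.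

(** A prefix of the normal form of a product of elements of [L] either is a prefix of
    the normal form of the first factor, or absorbs that factor entirely. *)
Lemma nf_prefix_coset (H : subset_of G) (L : list G) : subgroup H -> (forall x, In x L -> H x) ->
  forall w, (forall x, In x w -> In x L) -> forall p t, nf (gprod G w) = p ++ t ->
  exists h q, H h /\ In q (prefix_values L) /\ eval p = h * q.
Proof.
  intros [H1 [Hmul _]] HL. induction w as [|l w IH]; intros Hw p t E.
  - simpl in E. rewrite nf1 in E. destruct p; [|discriminate].
    exists e, e. split; [exact H1|]. split; [left; reflexivity|]. symmetry. apply gmul1l.
  - simpl gprod in E. destruct (nf_mul G n b Hfb l (gprod G w)) as (a & s & c & E1 & E2 & E3).
    rewrite E3 in E. apply app_eq_app in E as [m [[Ea _]|[Ep Eb]]].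
    + exists e, (eval p). split; [exact H1|]. split; [|symmetry; apply gmul1l].
      right. apply in_flat_map. exists l. split; [apply Hw; left; reflexivity|].
      apply in_map. rewrite E1, Ea, <- app_assoc. apply in_prefixes.
    + destruct (IH (fun x Hx => Hw x (or_intror Hx)) (word_inv s ++ m) t) as [h [q [Hh [Hq Heq]]]].
      { rewrite E2, Eb, app_assoc. reflexivity. }
      exists (l * h), q. split; [apply Hmul; [apply HL, Hw; left; reflexivity|exact Hh]|].
      split; [exact Hq|]. rewrite eval_app, eval_word_inv in Heq.
      assert (Ea : eval a = l * inv (eval s)).
      { rewrite <- (eval_nf G n b Hfb l), E1, eval_app, <- gmulA, gmulVr, gmul1r. reflexivity. }
      rewrite Ep, eval_app, Ea, <- gmulA, Heq, gmulA. reflexivity.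
Qed.

(** If every reduced word were a prefix of an element of [H], every element would lie in
    one of the finitely many cosets [H q] with [q] in [prefix_values]. *)
Lemma infinite_index_missing_prefix H : finitely_generated_subgroup H -> infinite_index H ->
  exists g0, forall h, H h -> forall t, nf h <> nf g0 ++ t.
Proof.
  intros [Hsub [L [HL Hgen]]] Hinf. pose proof Hsub as [_ [_ Hinv]].
  set (Lsym := L ++ map inv L).
  assert (HLsym : forall x, In x Lsym -> H x).
  { intros x Hx. apply in_app_or in Hx as [Hx|Hx]; [auto|].
    apply in_map_iff in Hx as [y [<- Hy]]. auto. }
  apply NNPP. intro Hn.
  destruct (Hinf (map inv (prefix_values Lsym))) as [g Hg].
  assert (Hx : exists h, H h /\ exists t, nf h = nf (inv g) ++ t).
  { apply NNPP. intro Hc. apply Hn. exists (inv g). intros h Hh t E. apply Hc. eauto. }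
  destruct Hx as [h [Hh [t Et]]]. destruct (Hgen h Hh) as [w [Hw <-]].
  destruct (nf_prefix_coset H Lsym Hsub HLsym w) with (p := nf (inv g)) (t := t)
    as [h0 [q [Hh0 [Hq Heq]]]]; [|exact Et|].
  { intros x Hx. apply in_or_app. destruct (Hw x Hx); [left; auto|right].
    rewrite <- (ginvK G x). apply in_map. auto. }
  rewrite eval_nf in Heq. apply (Hg (inv q)); [apply in_map, Hq|].
  replace (inv (inv q) * g) with (inv h0); [apply Hinv, Hh0|].
  rewrite ginvK, <- (ginvK G g), Heq, ginvM, gmulKVl. reflexivity.
Qed.

Lemma infinite_index_coset_head H : finitely_generated_subgroup H -> infinite_index H ->
  exists g0 lam, forall h, H h -> exists t, nf (inv g0 * h) = lam :: t.
Proof.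
  intros Hfg Hinf. destruct (infinite_index_missing_prefix H Hfg Hinf) as [g0 Hg0].
  destruct Hfg as [[H1 _] _].
  assert (Eg0 : nf g0 = word_inv (nf (inv g0))) by (rewrite nf_inv, word_invK; reflexivity).
  destruct (nf (inv g0)) as [|lam rest] eqn:Ez.
  { exfalso. apply (Hg0 e H1 []). rewrite nf1, Eg0. reflexivity. }
  exists g0, lam. intros h Hh.
  destruct (nf_mul G n b Hfb (inv g0) h) as (a & s & c & E1 & E2 & ->).
  rewrite Ez in E1. destruct a as [|y a].
  - exfalso. apply (Hg0 h Hh c). rewrite E2, Eg0, E1. reflexivity.
  - injection E1 as <- _. exists (a ++ c). reflexivity.
Qed.

Section Separation.
Variables (X : list G) (r : nat) (P : subset_of G) (c : G).
Hypothesis Hc : forall g, wlen g <= r * gen_bound X -> P (inv g * c).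

Lemma wlen_outside_negative x : ~ P (inv x) -> r * gen_bound X < wlen (c * x).
Proof.
  intro Hx. apply Nat.nle_gt. intro H. apply Hx.
  specialize (Hc (c * x) H). rewrite ginvM, <- gmulA, gmulVl, gmul1r in Hc. exact Hc.
Qed.

(** Outside [P^-1] the elements [c * p] are longer than an [r]-step, so two consecutive
    ones cannot start with different letters: there would be no cancellation between them. *)
Lemma hd_nf_step p q : dist_le G X p q r -> ~ P (inv p) -> ~ P (inv q) ->
  hd_error (nf (c * p)) = hd_error (nf (c * q)).
Proof.
  intros Hd Hp Hq.
  pose proof (wlen_outside_negative p Hp) as Bp. pose proof (wlen_outside_negative q Hq) as Bq.
  pose proof (dist_le_wlen X p q r Hd) as Hpq.
  replace (inv p * q) with (inv (c * p) * (c * q)) in Hpq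
    by (rewrite ginvM, <- gmulA, gmulKl; reflexivity).
  destruct (hd_nf_wlen_pos G n b Hfb (c * p)) as [l1 E1]; [lia|].
  destruct (hd_nf_wlen_pos G n b Hfb (c * q)) as [l2 E2]; [lia|].
  rewrite E1, E2. f_equal. apply NNPP. intro D.
  rewrite (wlen_inv_mul_heads G n b Hfb _ _ _ _ E1 E2 D) in Hpq. lia.
Qed.

Lemma hd_nf_constant_on_path g0 l : rpath G X r g0 l -> (forall x, In x (g0 :: l) -> ~ P (inv x)) ->
  hd_error (nf (c * g0)) = hd_error (nf (c * last l g0)).
Proof.
  revert g0. induction l as [|h t IH]; intros g0 Hp Hn; [reflexivity|].
  destruct Hp as [Hd Hp]. rewrite last_cons_default, <- IH; [|exact Hp|].
  - apply hd_nf_step; [exact Hd| |]; apply Hn; simpl; auto.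
  - intros x Hx. apply Hn. right. exact Hx.
Qed.

Lemma negative_disconnects A B l1 l2 : l1 <> l2 ->
  (forall x, A x -> hd_error (nf (c * x)) = Some l1) ->
  (forall x, B x -> hd_error (nf (c * x)) = Some l2) ->
  r_disconnects X r (fun x => P (inv x)) A B.
Proof.
  intros D HA HB g0 l Hp Ha Hb. apply NNPP. intro Hn.
  assert (E : Some l1 = Some l2).
  { rewrite <- (HA g0 Ha), <- (HB _ Hb). apply hd_nf_constant_on_path; [exact Hp|].
    intros x Hx Px. apply Hn. eauto. }
  congruence.
Qed.

Lemma negative_disconnects_cone : positive_cone P -> 2 <= n ->
  r_disconnects_cone X r (fun x => P (inv x)) P.
Proof.
  intros HP Hn.
  destruct (conj_power_in_cone P c 0 HP) as [s0 [P0 H0]]; [lia|].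
  destruct (conj_power_in_cone P c 1 HP) as [s1 [P1 H1]]; [lia|].
  do 2 eexists. split; [exact P0|]. split; [exact P1|].
  apply (negative_disconnects _ _ (0, s0) (1, s1)); [congruence| |];
    intros x ->; rewrite gmulKVl; assumption.
Qed.

Lemma negative_disconnects_cosets H : 2 <= n ->
  finitely_generated_subgroup H -> infinite_index H ->
  exists g1 g2, r_disconnects X r (fun x => P (inv x)) (lcoset g1 H) (lcoset g2 H).
Proof.
  intros Hn Hfg Hinf. destruct (infinite_index_coset_head H Hfg Hinf) as [g0 [lam Hlam]].
  set (j := if Nat.eqb (fst lam) 0 then 1 else 0).
  assert (Hj : j < n /\ fst lam <> j) by (unfold j; destruct (Nat.eqb_spec (fst lam) 0); lia).
  exists (inv c * (lval (j, true) * inv g0)), (inv c * (lval (j, false) * inv g0)).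
  apply (negative_disconnects _ _ (j, true) (j, false)); [congruence| |];
    intros x [h [Hh ->]]; rewrite <- gmulA, gmulKVl, <- gmulA;
    destruct (Hlam h Hh) as [t Et];
    rewrite (nf_letter_mul G n b Hfb j _ _ _ _ (proj1 Hj) Et (proj2 Hj)); reflexivity.
Qed.

End Separation.

End Swamps.

Theorem proposition5p4 (G : grp) (n : nat) (b : nat -> G) :
  2 <= n -> free_basis G n b ->
  @Hucha G (fun H => finitely_generated_subgroup H /\ infinite_index H).
Proof.
  intros Hn Hfb. split; [exists (map (letter_val G b) (letters n)); apply letters_generate, Hfb|].
  split; [exists (magnus_cone G n b Hfb); apply magnus_cone_positive_cone|].
  intros X _ _ P HP H [Hfg Hinf] r _.
  destruct (cone_above_ball G n b Hfb P HP ltac:(lia) (r * gen_bound G n b Hfb X)) as [c Hc].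
  exists (fun x => P (ginv G x)). split; [auto|]. split.
  - apply (negative_disconnects_cone G n b Hfb X r P c Hc HP Hn).
  - apply (negative_disconnects_cosets G n b Hfb X r P c Hc H Hn Hfg Hinf).
Qed.
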